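(* Let $N\ge16$ be an integer and $\rho\in[2/3,1)$. Then for every $k\ge0$, $1\le j\le 2^k$ and every $y\in L^k_j$, $$H_\flat\widehat\omega(y)=\int K_\flat(y-x)\,d\widehat\omega(x)=0$$ (the integral being absolutely convergent since $y$ has positive distance from $\mathsf E^{(N)}$). In particular $H_\flat\widehat\omega(\dot z^k_j)=0$ for all $k,j$.
   Context: Cantor intervals: fix an integer $N\ge16$ and $\rho\in[2/3,1)$. Set $I^0_1=[0,1]$. Each interval $I=[a,a+N^{-k}]$ of generation $k$ has two children of generation $k+1$: the left child $I_-=[a,a+N^{-k-1}]$ and the right child $I_+=[a+N^{-k}-N^{-k-1},a+N^{-k}]$. The $2^k$ intervals of generation $k$ are denoted $I^k_j$, $1\le j\le 2^k$, numbered left to right; $\mathcal D$ is the collection of all of them. $G^k_j$ is the open middle gap $I^k_j\setminus((I^k_j)_-\cup(I^k_j)_+)$, $\dot z^k_j$ is the common center of $I^k_j$ and $G^k_j$, and $L^k_j=[\dot z^k_j-N^{-k-1},\dot z^k_j+N^{-k-1}]$. The Cantor set is $\mathsf E^{(N)}=\bigcap_{k}\bigcup_{j}I^k_j$. Redistributed Cantor measure: with $\eta=1/N$, $\widehat\omega$ is the unique Borel probability measure supported on $\mathsf E^{(N)}$ such that $\widehat\omega(I^1_1)=\widehat\omega(I^1_2)=\frac12$ and for every $I\in\mathcal D$ of generation $\ge1$: if $I$ is the left child of its parent then $\widehat\omega(I_-)=\frac{1+\eta}2\widehat\omega(I)$, $\widehat\omega(I_+)=\frac{1-\eta}2\widehat\omega(I)$;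 if $I$ is the right child of its parent then $\widehat\omega(I_-)=\frac{1-\eta}2\widehat\omega(I)$, $\widehat\omega(I_+)=\frac{1+\eta}2\widehat\omega(I)$. Flattened kernel: $K_\flat$ is defined first on $[N^{-1/2},N^{1/2}]$ as a smooth nonincreasing function with values in $[N^{-1/2},N^{1/2}]$ such that $K_\flat(x)=1/x$ for $N^{-1/2}\le x\le(\rho N)^{-1/2}$ and for $(\rho N)^{1/2}\le x\le N^{1/2}$, and $K_\flat(x)=1$ for $(\rho^2N)^{-1/2}\le x\le(\rho^2N)^{1/2}$; then extended to $(0,\infty)$ by $K_\flat(x)=N^{-k}K_\flat(N^{-k}x)$ for $x\in[N^{k-1/2},N^{k+1/2}]$, $k\in\mathbb Z$, and to $\mathbb R\setminus\{0\}$ as an odd function. $H_\flat\mu(x)=\int K_\flat(x-y)\,d\mu(y)$. *)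

From Stdlib Require Import Reals Lra Lia ZArith Arith.
Open Scope R_scope.

(* Generation-k Cantor intervals, indexed 0-based: j in {0,...,2^k-1}
   corresponds to the paper's I^k_{j+1}.  The children of (k,j) are
   (k+1,2j) (left child) and (k+1,2j+1) (right child). *)

Fixpoint cantor_left (N : nat) (k j : nat) : R :=
  match k with
  | O => 0
  | S k' => cantor_left N k' (Nat.div2 j)
            + (if Nat.odd j then / INR N ^ k' - / INR N ^ k else 0)
  end.

Definition cantor_center (N k j : nat) : R :=
  cantor_left N k j + / INR N ^ k / 2.

(* hat omega (I^k_j): the redistributed Cantor measure.
   omega(I^0)=1, omega(I^1_j)=1/2, and for generation >= 1 a child
   receives (1+eta)/2 of its parent's mass iff it is on the same side
   (left/right) as its parent is w.r.t. the grandparent, else (1-eta)/2. *)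
Fixpoint omega_hat (N : nat) (k j : nat) : R :=
  match k with
  | O => 1
  | S O => / 2
  | S ((S _) as k') =>
      omega_hat N k' (Nat.div2 j) *
      (if Bool.eqb (Nat.odd j) (Nat.odd (Nat.div2 j))
       then (1 + / INR N) / 2 else (1 - / INR N) / 2)
  end.

Fixpoint sumR (m : nat) (f : nat -> R) : R :=
  match m with
  | O => 0
  | S m' => sumR m' f + f m'
  end.

Definition omega_sum (N : nat) (g : R -> R) (n : nat) : R :=
  sumR (2 ^ n) (fun j => omega_hat N n j * g (cantor_left N n j)).

(* "int g d(hat omega) = l" for g continuous near the Cantor set:
   the generation-n Riemann sums converge to l. *)
Definition omega_integral_is (N : nat) (g : R -> R) (l : R) : Prop :=
  Un_cv (omega_sum N g) l.

Definition smooth_on (f : R -> R) (a b : R) : Prop :=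
  exists F : nat -> R -> R, F O = f /\
    forall (n : nat) (x : R), a < x < b -> derivable_pt_lim (F n) x (F (S n) x).

Definition is_K_flat (N : nat) (rho : R) (K : R -> R) : Prop :=
  let sN := sqrt (INR N) in
  smooth_on K (/ sN) sN /\
  (forall x y, / sN <= x <= y -> y <= sN -> K y <= K x) /\
  (forall x, / sN <= x <= sN -> / sN <= K x <= sN) /\
  (forall x, / sN <= x <= / sqrt (rho * INR N) -> K x = / x) /\
  (forall x, sqrt (rho * INR N) <= x <= sN -> K x = / x) /\
  (forall x, / sqrt (rho ^ 2 * INR N) <= x <= sqrt (rho ^ 2 * INR N) -> K x = 1) /\
  (forall (k : Z) x, powerRZ (INR N) k / sN <= x <= powerRZ (INR N) k * sN ->
     K x = powerRZ (INR N) (- k) * K (powerRZ (INR N) (- k) * x)) /\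
  (forall x, x <> 0 -> K (- x) = - K x).

(** Fix [y] within [N^-(k+1)] of the center of [I^k_j].  For an ancestor
    [I = I^m_a] of [I^k_j], define its potential [P(I) = N^m (ω(I_-) - ω(I_+))].
    The child of [I] not containing [I^k_j] lies at distance between
    [3/8 N^-m] and [8/3 N^-m] from [y], a rescaled copy of the plateau where
    [K_flat = 1] (because [ρ √N >= 2/3 * 4 = 8/3]); there [K_flat(y - .) = ±N^m],
    so that child contributes [±N^m] times its mass.  For [I = I^k_j] this
    applies to both children, so every generation-[n] Riemann sum ([n > k])
    over [I] equals [P(I)].  Going up one level, the redistribution rule gives
    [P(J) = ±N^m ω(J)] for the child [J] of [I] containing [I^k_j], and adding
    the sibling's contribution yields [P(I)] again.  At the root both halves
    have mass [1/2], so [P([0,1]) = 0] and the Riemann sums are eventually [0]. *)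

From Stdlib Require Import Reals Lra Lia ZArith Arith.
Open Scope R_scope.

Lemma sumR_ext n f g : (forall t, (t < n)%nat -> f t = g t) -> sumR n f = sumR n g.
Proof.
  induction n as [|n IHn]; intros Hfg; simpl; [reflexivity|].
  rewrite IHn, Hfg; [reflexivity | lia | intros; apply Hfg; lia].
Qed.

Lemma sumR_add a b f : sumR (a + b) f = sumR a f + sumR b (fun t => f (a + t)%nat).
Proof.
  induction b as [|b IHb]; simpl; [rewrite Nat.add_0_r; ring|].
  rewrite Nat.add_succ_r. simpl. rewrite IHb. ring.
Qed.

Lemma Un_cv_eventually_0 (u : nat -> R) n0 : (forall n, (n0 <= n)%nat -> u n = 0) -> Un_cv u 0.
Proof.
  intros Hu eps Heps. exists n0. intros n Hn.
  unfold R_dist. rewrite Hu, Rminus_0_r, Rabs_R0 by exact Hn. exact Heps.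
Qed.

Section CantorIntervals.

Variable N : nat.

Definition cantor_len (m : nat) : R := / INR N ^ m.

Lemma cantor_len_pos m : (1 <= N)%nat -> 0 < cantor_len m.
Proof. intros HN. apply Rinv_0_lt_compat, pow_lt, lt_0_INR. lia. Qed.

Lemma cantor_len_S m : cantor_len (S m) = cantor_len m / INR N.
Proof. unfold cantor_len. simpl. rewrite Rinv_mult. unfold Rdiv. ring. Qed.

Lemma cantor_len_S_le m : (1 <= N)%nat -> cantor_len (S m) <= cantor_len m.
Proof.
  intros HN. rewrite cantor_len_S. pose proof (cantor_len_pos m HN).
  assert (1 <= INR N) by (apply (le_INR 1); exact HN).
  apply Rmult_le_reg_r with (INR N); [lra|].
  unfold Rdiv. rewrite Rmult_assoc, Rinv_l by lra. nra.
Qed.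

Lemma cantor_left_S m j :
  cantor_left N (S m) j =
  cantor_left N m (Nat.div2 j) + (if Nat.odd j then cantor_len m - cantor_len (S m) else 0).
Proof. reflexivity. Qed.

Lemma cantor_left_double m a : cantor_left N (S m) (2 * a) = cantor_left N m a.
Proof. rewrite cantor_left_S, Nat.div2_double, Nat.odd_even. ring. Qed.

Lemma cantor_left_double_succ m a :
  cantor_left N (S m) (2 * a + 1) = cantor_left N m a + cantor_len m - cantor_len (S m).
Proof. rewrite cantor_left_S, Nat.div2_odd', Nat.odd_odd. ring. Qed.

Lemma cantor_descendant_bounds d m a r : (1 <= N)%nat -> (r < 2 ^ d)%nat ->
  cantor_left N m a <= cantor_left N (m + d) (a * 2 ^ d + r) /\
  cantor_left N (m + d) (a * 2 ^ d + r) + cantor_len (m + d) <= cantor_left N m a + cantor_len m.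
Proof.
  intros HN. revert m a r. induction d as [|d IHd]; intros m a r Hr.
  - simpl in Hr. replace r with 0%nat by lia.
    rewrite Nat.add_0_r, Nat.mul_1_r, Nat.add_0_r. lra.
  - pose proof (cantor_len_S_le m HN). pose proof (cantor_len_pos (S m) HN).
    replace (m + S d)%nat with (S m + d)%nat by lia.
    destruct (Nat.lt_ge_cases r (2 ^ d)) as [Hleft|Hright].
    + replace (a * 2 ^ S d + r)%nat with (2 * a * 2 ^ d + r)%nat by (simpl; ring).
      destruct (IHd (S m) (2 * a)%nat r Hleft) as [Hlo Hhi].
      rewrite cantor_left_double in Hlo, Hhi. lra.
    + simpl in Hr.
      replace (a * 2 ^ S d + r)%nat with ((2 * a + 1) * 2 ^ d + (r - 2 ^ d))%nat by (simpl; nia).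
      destruct (IHd (S m) (2 * a + 1)%nat (r - 2 ^ d)%nat ltac:(lia)) as [Hlo Hhi].
      rewrite cantor_left_double_succ in Hlo, Hhi. lra.
Qed.

Lemma omega_hat_SS m j :
  omega_hat N (S (S m)) j =
  omega_hat N (S m) (Nat.div2 j) *
  (if Bool.eqb (Nat.odd j) (Nat.odd (Nat.div2 j)) then (1 + / INR N) / 2 else (1 - / INR N) / 2).
Proof. reflexivity. Qed.

Lemma omega_hat_double m a :
  omega_hat N (S (S m)) (2 * a) =
  omega_hat N (S m) a * (if Nat.odd a then (1 - / INR N) / 2 else (1 + / INR N) / 2).
Proof. rewrite omega_hat_SS, Nat.div2_double, Nat.odd_even. now destruct (Nat.odd a). Qed.

Lemma omega_hat_double_succ m a :
  omega_hat N (S (S m)) (2 * a + 1) =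
  omega_hat N (S m) a * (if Nat.odd a then (1 + / INR N) / 2 else (1 - / INR N) / 2).
Proof. rewrite omega_hat_SS, Nat.div2_odd', Nat.odd_odd. now destruct (Nat.odd a). Qed.

Lemma omega_hat_children m a :
  omega_hat N (S m) (2 * a) + omega_hat N (S m) (2 * a + 1) = omega_hat N m a.
Proof.
  destruct m as [|m]; [simpl; lra|].
  rewrite omega_hat_double, omega_hat_double_succ.
  set (eta := / INR N). destruct (Nat.odd a); field.
Qed.

Definition potential (m a : nat) : R :=
  INR N ^ m * (omega_hat N (S m) (2 * a) - omega_hat N (S m) (2 * a + 1)).

Lemma potential_root : potential 0 0 = 0.
Proof. unfold potential. simpl. ring. Qed.

Lemma potential_S m a : (1 <= N)%nat ->
  potential (S m) a = (if Nat.odd a then - 1 else 1) * INR N ^ m * omega_hat N (S m) a.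
Proof.
  intros HN. assert (HN0 : INR N <> 0) by (apply not_0_INR; lia).
  unfold potential. rewrite omega_hat_double, omega_hat_double_succ.
  simpl. destruct (Nat.odd a); field; exact HN0.
Qed.

Definition subtree_sum (g : R -> R) (m a n : nat) : R :=
  sumR (2 ^ n) (fun t => omega_hat N (m + n) (a * 2 ^ n + t) *
                         g (cantor_left N (m + n) (a * 2 ^ n + t))).

Lemma subtree_sum_S g m a n :
  subtree_sum g m a (S n) = subtree_sum g (S m) (2 * a) n + subtree_sum g (S m) (2 * a + 1) n.
Proof.
  unfold subtree_sum. replace (2 ^ S n)%nat with (2 ^ n + 2 ^ n)%nat by (simpl; lia).
  rewrite sumR_add. replace (m + S n)%nat with (S m + n)%nat by lia. f_equal.
  - apply sumR_ext; intros t _.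
    replace (a * (2 ^ n + 2 ^ n) + t)%nat with (2 * a * 2 ^ n + t)%nat by ring. reflexivity.
  - apply sumR_ext; intros t _.
    replace (a * (2 ^ n + 2 ^ n) + (2 ^ n + t))%nat with ((2 * a + 1) * 2 ^ n + t)%nat by ring.
    reflexivity.
Qed.

Lemma subtree_sum_const g c m a n : (1 <= N)%nat ->
  (forall x, cantor_left N m a <= x <= cantor_left N m a + cantor_len m -> g x = c) ->
  subtree_sum g m a n = c * omega_hat N m a.
Proof.
  intros HN. revert m a. induction n as [|n IHn]; intros m a Hg.
  - unfold subtree_sum. simpl. rewrite Nat.add_0_r, Nat.mul_1_r, Nat.add_0_r, Hg.
    + ring.
    + pose proof (cantor_len_pos m HN). lra.
  - pose proof (cantor_len_S_le m HN). pose proof (cantor_len_pos (S m) HN).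
    rewrite subtree_sum_S, (IHn (S m) (2 * a)%nat), (IHn (S m) (2 * a + 1)%nat),
      <- (omega_hat_children m a).
    + ring.
    + intros x Hx. apply Hg. rewrite cantor_left_double_succ in Hx. lra.
    + intros x Hx. apply Hg. rewrite cantor_left_double in Hx. lra.
Qed.

End CantorIntervals.

Section FlatKernel.

Variables (N : nat) (rho : R) (K : R -> R).
Hypotheses (N_ge16 : (16 <= N)%nat) (rho_range : 2 / 3 <= rho < 1) (K_flat : is_K_flat N rho K).

Let N_ge1 : (1 <= N)%nat. Proof. lia. Qed.

Let INR_N_ge16 : 16 <= INR N.
Proof. replace 16 with (INR 16) by (simpl; lra). apply le_INR, N_ge16. Qed.

Lemma cantor_len_S_le_16 m : cantor_len N (S m) <= cantor_len N m / 16.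
Proof.
  rewrite cantor_len_S. pose proof (cantor_len_pos N m N_ge1).
  unfold Rdiv. apply Rmult_le_compat_l; [lra|]. apply Rinv_le_contravar; lra.
Qed.

Lemma K_flat_plateau e x :
  3 / 8 * cantor_len N e <= x <= 8 / 3 * cantor_len N e -> K x = INR N ^ e.
Proof.
  intros Hx. destruct K_flat as (_ & _ & _ & _ & _ & Hone & Hscale & _).
  assert (HsN : 4 <= sqrt (INR N)).
  { rewrite <- (sqrt_pow2 4) by lra. apply sqrt_le_1_alt. lra. }
  set (sN := sqrt (INR N)) in *.
  pose proof (cantor_len_pos N e N_ge1) as Hlen.
  assert (Hlen_inv : cantor_len N e * INR N ^ e = 1)
    by (unfold cantor_len; field; apply pow_nonzero; lra).
  assert (Hpow : powerRZ (INR N) (- Z.of_nat e) = cantor_len N e)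
    by (rewrite powerRZ_neg', <- pow_powerRZ; reflexivity).
  rewrite (Hscale (- Z.of_nat e)%Z x).
  2:{ rewrite Hpow. split.
      - apply Rle_trans with (cantor_len N e / 4); [|lra].
        apply Rmult_le_compat_l; [lra|]. apply Rinv_le_contravar; lra.
      - apply Rle_trans with (cantor_len N e * 4); [lra|]. apply Rmult_le_compat_l; lra. }
  rewrite Z.opp_involutive, <- pow_powerRZ, Hone; [ring|].
  rewrite sqrt_mult, sqrt_pow2 by (try apply pow2_ge_0; lra). fold sN.
  assert (Hhi : 8 / 3 <= rho * sN) by nra.
  assert (/ (rho * sN) <= 3 / 8) by (rewrite <- (Rinv_inv (3 / 8)); apply Rinv_le_contravar; lra).
  split; nra.
Qed.

Lemma K_flat_plateau_neg e x :
  - (8 / 3) * cantor_len N e <= x <= - (3 / 8) * cantor_len N e -> K x = - INR N ^ e.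
Proof.
  intros Hx. pose proof (cantor_len_pos N e N_ge1).
  destruct K_flat as (_ & _ & _ & _ & _ & _ & _ & Hodd).
  replace x with (- - x) by ring. rewrite Hodd, (K_flat_plateau e) by lra. reflexivity.
Qed.

Lemma subtree_sum_left_child y m a n :
  cantor_left N m a + cantor_len N (S m) + 3 / 8 * cantor_len N m <= y <=
  cantor_left N m a + 8 / 3 * cantor_len N m ->
  subtree_sum N (fun x => K (y - x)) (S m) (2 * a) n = INR N ^ m * omega_hat N (S m) (2 * a).
Proof.
  intros Hy. apply (subtree_sum_const N); [exact N_ge1|]. intros x Hx.
  rewrite cantor_left_double in Hx. apply K_flat_plateau. lra.
Qed.

Lemma subtree_sum_right_child y m a n :
  cantor_left N m a - 5 / 3 * cantor_len N m <= y <=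
  cantor_left N m a + 5 / 8 * cantor_len N m - cantor_len N (S m) ->
  subtree_sum N (fun x => K (y - x)) (S m) (2 * a + 1) n =
  - INR N ^ m * omega_hat N (S m) (2 * a + 1).
Proof.
  intros Hy. apply (subtree_sum_const N); [exact N_ge1|]. intros x Hx.
  rewrite cantor_left_double_succ in Hx. apply K_flat_plateau_neg. lra.
Qed.

Lemma subtree_sum_near_center y d m a r n : (r < 2 ^ d)%nat -> (d < n)%nat ->
  cantor_center N (m + d) (a * 2 ^ d + r) - cantor_len N (S (m + d)) <= y <=
  cantor_center N (m + d) (a * 2 ^ d + r) + cantor_len N (S (m + d)) ->
  subtree_sum N (fun x => K (y - x)) m a n = potential N m a.
Proof.
  unfold cantor_center. change (/ INR N ^ (m + d)) with (cantor_len N (m + d)).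
  revert m a r n. induction d as [|d IHd]; intros m a r n Hr Hn Hy;
    destruct n as [|n]; try lia; rewrite subtree_sum_S;
    pose proof (cantor_len_S_le_16 m); pose proof (cantor_len_pos N (S m) N_ge1).
  - simpl in Hr. replace r with 0%nat in Hy by lia.
    rewrite Nat.add_0_r, Nat.mul_1_r, Nat.add_0_r in Hy.
    rewrite subtree_sum_left_child, subtree_sum_right_child by lra.
    unfold potential. ring.
  - replace (m + S d)%nat with (S m + d)%nat in Hy by lia.
    pose proof (cantor_len_S_le_16 (S m + d)).
    destruct (Nat.lt_ge_cases r (2 ^ d)) as [Hleft|Hright].
    + replace (a * 2 ^ S d + r)%nat with (2 * a * 2 ^ d + r)%nat in Hy by (simpl; ring).
      destruct (cantor_descendant_bounds N d (S m) (2 * a) r N_ge1 Hleft) as [Hlo Hhi].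
      rewrite cantor_left_double in Hlo, Hhi.
      rewrite (IHd (S m) (2 * a)%nat r n Hleft ltac:(lia) Hy), subtree_sum_right_child by lra.
      rewrite potential_S, Nat.odd_even by exact N_ge1. unfold potential. ring.
    + simpl in Hr.
      replace (a * 2 ^ S d + r)%nat with ((2 * a + 1) * 2 ^ d + (r - 2 ^ d))%nat in Hy
        by (simpl; nia).
      destruct (cantor_descendant_bounds N d (S m) (2 * a + 1) (r - 2 ^ d) N_ge1 ltac:(lia))
        as [Hlo Hhi].
      rewrite cantor_left_double_succ in Hlo, Hhi.
      rewrite (IHd (S m) (2 * a + 1)%nat (r - 2 ^ d)%nat n ltac:(lia) ltac:(lia) Hy),
        subtree_sum_left_child by lra.
      rewrite potential_S, Nat.odd_odd by exact N_ge1. unfold potential. ring.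
Qed.

End FlatKernel.

Theorem mainTheorem3 (N : nat) (rho : R) (K : R -> R) :
  (16 <= N)%nat -> 2 / 3 <= rho < 1 -> is_K_flat N rho K ->
  forall (k j : nat), (j < 2 ^ k)%nat ->
    (forall y : R,
       cantor_center N k j - / INR N ^ (S k) <= y <= cantor_center N k j + / INR N ^ (S k) ->
       omega_integral_is N (fun x => K (y - x)) 0) /\
    omega_integral_is N (fun x => K (cantor_center N k j - x)) 0.
Proof.
  intros HN Hrho HK k j Hj.
  assert (Hnear : forall y,
    cantor_center N k j - cantor_len N (S k) <= y <= cantor_center N k j + cantor_len N (S k) ->
    omega_integral_is N (fun x => K (y - x)) 0).
  { intros y Hy. apply Un_cv_eventually_0 with (S k). intros n Hn.
    change (omega_sum N (fun x => K (y - x)) n) with (subtree_sum N (fun x => K (y - x)) 0 0 n).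
    rewrite (subtree_sum_near_center N rho K HN Hrho HK y k 0 0 j n Hj ltac:(lia) Hy).
    apply potential_root. }
  split; [exact Hnear|]. apply Hnear.
  pose proof (cantor_len_pos N (S k) ltac:(lia)). lra.
Qed.
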